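(* Let $\alpha\in(0,1]$. For all $n$ such that $n^\alpha=2^q$ for a positive integer $q$, the sparse grid $B_n$ satisfies $|B_n|=O(n^{2-\alpha}\log n)$.
   Context: Assume $n^\alpha=2^q$ with $q$ a positive integer (so $n^\alpha$ is an integer). Let $A_n=\{(i,j)\in\mathbb{Z}^2: 0\le i,j\le 14n\}$. The sparse grid $B_n\subseteq A_n$ is the set of points of $A_n$ of at least one of the following forms: (1) $(i,j)$ with $n^\alpha \mid ij$; (2) $(i+k,j+k)$ with $n^\alpha\mid i$, $n^\alpha\mid j$ and $k\in\{1,2,\dots,n^\alpha\}$ (points on forward diagonals); (3) $(i+k,j-k)$ with $n^\alpha\mid i$, $n^\alpha\mid j$ and $k\in\{1,2,\dots,n^\alpha\}$ (points on backward diagonals). *)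

From HB Require Import structures.
From mathcomp Require Import all_boot all_order all_algebra.
From mathcomp Require Import all_classical all_reals all_analysis.
Set Implicit Arguments. Unset Strict Implicit. Unset Printing Implicit Defensive.
Import Order.TTheory GRing.Theory Num.Theory.
Local Open Scope ring_scope.

(* Membership in the sparse grid, with m standing for n^alpha. *)
Definition in_sparse (m : nat) (x y : int) : Prop :=
  (m%:Z %| x * y)%Z \/
  (exists (i j : int) (k : nat), (m%:Z %| i)%Z /\ (m%:Z %| j)%Z /\
      (1 <= k <= m)%N /\ x = i + k%:Z /\ y = j + k%:Z) \/
  (exists (i j : int) (k : nat), (m%:Z %| i)%Z /\ (m%:Z %| j)%Z /\
      (1 <= k <= m)%N /\ x = i + k%:Z /\ y = j - k%:Z).

Definition A_type (n : nat) := ('I_(14 * n).+1 * 'I_(14 * n).+1)%type.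

Definition sparse_grid (n m : nat) : {set A_type n} :=
  [set p : A_type n | `[< in_sparse m (nat_of_ord p.1)%:Z (nat_of_ord p.2)%:Z >] ].

From HB Require Import structures.
From mathcomp Require Import all_boot all_order all_algebra.
From mathcomp Require Import all_classical all_reals all_analysis.
From mathcomp Require Import zify ring.
Import Order.TTheory GRing.Theory Num.Theory.

(** With m = 2^q and N = 14n, every point of the sparse grid satisfies
  m | xy, x = y (mod m) or x = -y (mod m).  The last two sets are unions of
  m products of residue classes, each of size at most (N/m + 1)^2, so each has
  O(N^2/m) points.  If m | xy then 2^a | x and 2^(q-a) | y for some a <= q,
  which gives q + 1 products of size O(N^2/m).  Hence
  |B_n| = O(q n^2 / m), and q = alpha log2 n, m = n^alpha. *)

Lemma leq_card_bigcup_mul (T : finType) k (F : nat -> {set T}) M c :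
  (forall i, i < k -> #|F i| * M <= c) ->
  #|\bigcup_(i < k) F i| * M <= k * c.
Proof.
elim: k => [|k IH] leFc; first by rewrite big_ord0 cards0.
rewrite big_ord_recr /=.
apply: leq_trans (_ : (#|\bigcup_(i < k) F i| + #|F k|) * M <= _).
  by rewrite leq_mul2r (leq_card_setU _ _) orbT.
rewrite mulnDl mulSn addnC leq_add ?leFc //.
by apply: IH => i /ltnW; apply: leFc.
Qed.

Lemma card_congr_class_le N d (P : pred 'I_N.+1) :
  (forall y z, P y -> P z -> y %% d = z %% d) -> #|[set y | P y]| <= N %/ d + 1.
Proof.
move=> congrP.
have quo_lt (y : 'I_N.+1) : y %/ d < (N %/ d).+1.
  by rewrite ltnS leq_div2r // -ltnS.
pose quo (y : 'I_N.+1) : 'I_(N %/ d).+1 := inord (y %/ d).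
rewrite -(card_in_imset (f := quo)); last first.
  move=> y z; rewrite !inE => Py Pz /(congr1 val).
  rewrite /= !inordK ?quo_lt // => eq_quo.
  by apply: val_inj; rewrite /= (divn_eq y d) (divn_eq z d) eq_quo (congrP _ _ Py Pz).
by rewrite addn1; apply: leq_trans (max_card _) _; rewrite card_ord.
Qed.

Lemma leq_divn_add1_mul N d : d <= N -> (N %/ d + 1) * d <= 2 * N.
Proof. by move=> le_dN; rewrite mulnDl mul1n; have := leq_divM N d; lia. Qed.

Lemma card_setX_congr_mul_le N d1 d2 (P1 P2 : pred 'I_N.+1) :
  d1 <= N -> d2 <= N ->
  (forall y z, P1 y -> P1 z -> y %% d1 = z %% d1) ->
  (forall y z, P2 y -> P2 z -> y %% d2 = z %% d2) ->
  #|finset.setX [set y | P1 y] [set y | P2 y]| * (d1 * d2) <= (2 * N) ^ 2.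
Proof.
move=> le_d1N le_d2N congr1 congr2.
rewrite cardsX mulnACA expnS expn1.
apply: leq_mul.
  apply: leq_trans (leq_divn_add1_mul _ _ le_d1N).
  by rewrite leq_mul2r card_congr_class_le ?orbT.
apply: leq_trans (leq_divn_add1_mul _ _ le_d2N).
by rewrite leq_mul2r card_congr_class_le ?orbT.
Qed.

Lemma pfactor_dvdn_mul_split p q x y : prime p -> p ^ q %| x * y ->
  exists2 a, a <= q & (p ^ a %| x) && (p ^ (q - a) %| y).
Proof.
move=> p_pr dv_xy.
have [->|x_gt0] := posnP x; first by exists q; rewrite ?subnn ?dvd1n ?dvdn0.
have [->|y_gt0] := posnP y; first by exists 0; rewrite ?dvd1n ?dvdn0.
rewrite pfactor_dvdn ?muln_gt0 ?x_gt0 // lognM // in dv_xy.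
by exists (minn (logn p x) q); rewrite ?geq_minr // !pfactor_dvdn //; apply/andP; lia.
Qed.

Lemma in_sparse_nat_cases m (x y : nat) : in_sparse m x y ->
  [\/ m %| x * y, x = y %[mod m] | m %| x + y].
Proof.
case=> [|[] [i [j [k [mi [mj [_ [ex ey]]]]]]]].
- by rewrite -PoszM dvdzE => ?; apply: Or31.
- apply: Or32; apply/eqP.
  have : (x%:Z == y%:Z %[mod m])%Z.
    by rewrite eqz_mod_dvd ex ey opprD addrACA subrr addr0 rpredB.
  by rewrite !modz_nat => /eqP [->].
- apply: Or33.
  have : (m%:Z %| (x%:Z + y%:Z)%R)%Z by rewrite ex ey addrACA subrr addr0 rpredD.
  by rewrite -PoszD dvdzE.
Qed.

Section SparseGridCount.

Variables n q : nat.
Local Notation N := (14 * n).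
Local Notation m := (2 ^ q).

Definition dvd_block (a : nat) : {set A_type n} :=
  finset.setX [set x : 'I_N.+1 | 2 ^ a %| x] [set y : 'I_N.+1 | 2 ^ (q - a) %| y].

Definition diag_block (r : nat) : {set A_type n} :=
  finset.setX [set x : 'I_N.+1 | x %% m == r] [set y : 'I_N.+1 | y %% m == r].

Definition antidiag_block (r : nat) : {set A_type n} :=
  finset.setX [set x : 'I_N.+1 | x %% m == r] [set y : 'I_N.+1 | (r + y) %% m == 0].

Definition dvd_part := \bigcup_(a < q.+1) dvd_block a.
Definition diag_part := \bigcup_(r < m) diag_block r.
Definition antidiag_part := \bigcup_(r < m) antidiag_block r.

Lemma sparse_grid_subset :
  sparse_grid n m \subset dvd_part :|: diag_part :|: antidiag_part.
Proof.
have m_gt0 : 0 < m by rewrite expn_gt0.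
apply/fintype.subsetP => [[x y]]; rewrite inE => /asboolP /in_sparse_nat_cases /=.
rewrite !inE => -[m_xy | eq_xy | m_xy].
- have [a le_aq /andP[dv_x dv_y]] := pfactor_dvdn_mul_split _ _ _ _ (isT : prime 2) m_xy.
  apply/orP; left; apply/orP; left; apply/bigcupP.
  by exists (Ordinal (le_aq : a < q.+1)); rewrite // /dvd_block !inE /= dv_x dv_y.
- apply/orP; left; apply/orP; right; apply/bigcupP.
  by exists (Ordinal (ltn_pmod x m_gt0)); rewrite // /diag_block !inE /= eq_xy eqxx.
- apply/orP; right; apply/bigcupP.
  by exists (Ordinal (ltn_pmod x m_gt0)); rewrite // /antidiag_block !inE /= eqxx modnDml.
Qed.

Hypothesis le_mn : m <= n.

Let le_mN : m <= N.
Proof. by apply: leq_trans le_mn _; rewrite leq_pmull. Qed.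

Lemma card_dvd_part : #|dvd_part| * m <= q.+1 * (2 * N) ^ 2.
Proof.
rewrite /dvd_part; apply: leq_card_bigcup_mul => a le_aq; rewrite /dvd_block.
have le_pow b : b <= q -> 2 ^ b <= N.
  by move=> le_bq; apply: leq_trans le_mN; rewrite leq_pexp2l.
rewrite -{2}(subnKC (le_aq : a <= q)) expnD.
apply: (card_setX_congr_mul_le _ _ _ (fun x => 2 ^ a %| x) (fun y => 2 ^ (q - a) %| y));
  rewrite ?le_pow ?leq_subr //;
  by move=> y z /eqP -> /eqP ->.
Qed.

Lemma card_diag_part : #|diag_part| * m <= (2 * N) ^ 2.
Proof.
have m_gt0 : 0 < m by rewrite expn_gt0.
rewrite -(leq_pmul2r m_gt0) -mulnA [_ ^ 2 * m]mulnC /diag_part.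
apply: leq_card_bigcup_mul => r _; rewrite /diag_block.
apply: (card_setX_congr_mul_le _ _ _ (fun x => x %% m == r) (fun y => y %% m == r)) => //;
  by move=> y z /eqP -> /eqP ->.
Qed.

Lemma card_antidiag_part : #|antidiag_part| * m <= (2 * N) ^ 2.
Proof.
have m_gt0 : 0 < m by rewrite expn_gt0.
rewrite -(leq_pmul2r m_gt0) -mulnA [_ ^ 2 * m]mulnC /antidiag_part.
apply: leq_card_bigcup_mul => r _; rewrite /antidiag_block.
apply: (card_setX_congr_mul_le _ _ _ (fun x => x %% m == r) (fun y => (r + y) %% m == 0)) => //.
- by move=> y z /eqP -> /eqP ->.
- by move=> y z /eqP ry /eqP rz; apply/eqP; rewrite -(eqn_modDl r) ry rz.
Qed.

Lemma card_sparse_grid_mul_le : 0 < q -> #|sparse_grid n m| * m <= 3136 * q * n ^ 2.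
Proof.
move=> q_gt0.
have le_card_parts :
    #|sparse_grid n m| <= #|dvd_part| + #|diag_part| + #|antidiag_part|.
  apply: leq_trans (subset_leq_card sparse_grid_subset) _.
  by apply: leq_trans (leq_card_setU _ _) _; rewrite leq_add2r leq_card_setU.
apply: leq_trans (leq_mul le_card_parts (leqnn m)) _.
rewrite 2!mulnDl.
apply: leq_trans (leq_add (leq_add card_dvd_part card_diag_part) card_antidiag_part) _.
have -> : (2 * N) ^ 2 = 784 * n ^ 2 by rewrite !expnMn mulnA.
by rewrite -!mulSnr mulnA leq_mul2r; lia.
Qed.

End SparseGridCount.

Local Open Scope ring_scope.

Lemma pow2_le_of_powR_eq (R : realType) (alpha : R) (n q : nat) :
  0 < alpha <= 1 -> n%:R `^ alpha = 2 ^+ q -> (2 ^ q <= n)%N.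
Proof.
move=> /andP[alpha_gt0 alpha_le1] eq_pow.
have pow2_neq0 : (2 : R) ^+ q != 0 by rewrite expf_neq0 // pnatr_eq0.
have n_ge1 : 1 <= n%:R :> R.
  rewrite ler1n lt0n; apply/eqP => n0; move/eqP: pow2_neq0; apply.
  by rewrite -eq_pow n0 powR0 // gt_eqF.
rewrite -(ler_nat R) natrX -eq_pow.
by apply: le_trans (ler_powR n_ge1 alpha_le1) _; rewrite powRr1 // ler0n.
Qed.

Theorem lemma3 (R : realType) (alpha : R) :
  0 < alpha <= 1 ->
  exists (C : R) (N : nat), forall (n q : nat),
    (N <= n)%N -> (0 < q)%N -> (n%:R : R) `^ alpha = 2 ^+ q ->
    (#|sparse_grid n (2 ^ q)|%:R : R) <= C * ((n%:R : R) `^ (2 - alpha) * ln (n%:R : R)).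
Proof.
move=> alpha_bounds.
have ln2_gt0 : (0 : R) < ln 2 by rewrite ln_gt0 // ltr1n.
exists (3136%:R * alpha / ln 2), 0%N => n q _ q_gt0 eq_pow.
have le_mn := pow2_le_of_powR_eq _ _ _ _ alpha_bounds eq_pow.
have n_gt0 : (0 < n)%N by apply: leq_trans le_mn; rewrite expn_gt0.
have pow2_gt0 : (0 : R) < 2 ^+ q by rewrite exprn_gt0.
have ln_n : alpha * ln n%:R = q%:R * ln 2 by rewrite -ln_powR eq_pow lnXn // mulr_natl.
have pow_n : n%:R `^ (2 - alpha) = n%:R ^+ 2 / 2 ^+ q :> R.
  rewrite powRB; last by rewrite pnatr_eq0 -lt0n n_gt0 implybT.
  by rewrite eq_pow powR_mulrn // ler0n.
have -> : 3136%:R * alpha / ln 2 * (n%:R `^ (2 - alpha) * ln n%:R)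
    = 3136%:R * n%:R ^+ 2 / 2 ^+ q / ln 2 * (q%:R * ln 2) :> R.
  by rewrite -ln_n pow_n; ring.
rewrite [q%:R * _]mulrC mulrA divfK ?gt_eqF // mulrAC ler_pdivlMr //.
rewrite -!natrX -!natrM ler_nat mulnAC.
exact: card_sparse_grid_mul_le.
Qed.
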